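(* For all nonnegative integers $a_1,a_2,s$, \[ G(a_1,a_2,s)=\sum_{b_1,b_2\ge0}(-1)^{b_1+b_2}\binom{a_1+a_2-b_1-b_2}{s}\binom{a_1+a_2-b_1-b_2}{a_1-b_1}, \] where $\binom{N}{K}=0$ unless $0\le K\le N$.
   Context: For integers $a_1,a_2,s$ with $a=a_1+a_2$, $G(a_1,a_2,s)=\sum_m N_m$, the sum over integers $m$ such that $a_1-m,\ a_2-(s-m),\ m,\ s-m$ are all nonnegative (an empty sum is $0$), where $N_m$ is the number of permutations $\pi$ of $[a]$ that are decreasing within each of four consecutive blocks of positions of lengths $a_1-m,\ a_2-(s-m),\ m,\ s-m$ (in this order; arbitrary between blocks), and have no fixed point ($\pi_i=i$) in the first two blocks. *)

From mathcomp Require Import all_boot all_order all_algebra all_fingroup.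
Set Implicit Arguments. Unset Strict Implicit. Unset Printing Implicit Defensive.
Import GRing.Theory Num.Theory.

Definition block_of (l1 l2 l3 i : nat) : nat :=
  if i < l1 then 0 else if i < l1 + l2 then 1 else if i < l1 + l2 + l3 then 2 else 3.

(* Only meaningful when m <= a1, m <= s, s-m <= a2. *)
Definition Nm (a1 a2 s m : nat) : nat :=
  let blk := block_of (a1 - m) (a2 - (s - m)) m in
  #|[set p : 'S_(a1 + a2) |
      [forall i : 'I_(a1 + a2), forall j : 'I_(a1 + a2),
         ((i < j) && (blk i == blk j)) ==> (p j < p i)]
      && [forall i : 'I_(a1 + a2), (blk i < 2) ==> (p i != i)]]|.

Definition G (a1 a2 s : nat) : nat :=
  \sum_(0 <= m < s.+1 | (m <= a1) && (s - m <= a2)) Nm a1 a2 s m.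

Definition binZ (N K : int) : int :=
  if ((0 <= K) && (K <= N))%R then Posz 'C(absz N, absz K) else 0%R.

From mathcomp Require Import all_boot all_order all_algebra all_fingroup.
From mathcomp Require Import zify ring.
Import GRing.Theory Num.Theory.
Set Implicit Arguments. Unset Strict Implicit. Unset Printing Implicit Defensive.

(* On a block where a permutation decreases it has at most one fixed point.  Deleting
   such a fixed point [i] (through [lift_perm i i]) is a bijection onto the permutations
   of one size less that decrease on the blocks, the block of [i] shrunk by one, and have
   no fixed point in that block: conversely such a permutation has exactly one position
   in the block where a new fixed point can be inserted without breaking monotonicity.
   Hence the number D(n, l) of block-decreasing permutations without fixed point in a
   block of length l satisfies D(n+1, l+1) = T(n+1, l+1) - D(n, l), where T counts all
   block-decreasing permutations.  Unrolling this for the first two blocks writes N_m as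
   an alternating double sum of T's; T is a multinomial coefficient, and the sum over m
   collapses by Vandermonde's identity. *)

Lemma ltn_bump2 h i j : (bump h i < bump h j) = (i < j).
Proof. by rewrite !ltnNge leq_bump2. Qed.

Lemma ltn_bumpl h i : (bump h i < h) = (i < h).
Proof. by rewrite /bump; case: leqP => /= *; apply/idP/idP; lia. Qed.

Lemma ltn_bumpr h i : (h < bump h i) = (h <= i).
Proof. by rewrite /bump; case: leqP => /= *; apply/idP/idP; lia. Qed.

Lemma card_set_indicator (T : finType) (P : pred T) :
  #|[set x | P x]| = \sum_x (P x : nat).
Proof. by rewrite -sum1dep_card big_mkcond; apply: eq_bigr => x _; case: (P x). Qed.

Lemma sum_indicator_uniq (T : finType) (Q P : pred T) :
  {in Q &, forall i j, P i -> P j -> i = j} ->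
  \sum_(i | Q i) (P i : nat) = [exists i, Q i && P i].
Proof.
move=> Puniq; case: existsP => [[i0 /andP[Qi0 Pi0]] | noP].
  rewrite (bigD1 i0) //= Pi0 big1 // => i /andP[Qi ne_i].
  by apply/eqP; rewrite eqb0; apply: contra ne_i => Pi; rewrite (Puniq i i0).
rewrite big1 // => i Qi; apply/eqP; rewrite eqb0.
by apply: contra_notN noP => Pi; exists i; rewrite Qi.
Qed.

Lemma card_lift_perm n (i k : 'I_n.+1) (P : pred 'S_n.+1) :
  #|[set p : 'S_n.+1 | (p i == k) && P p]| = #|[set q : 'S_n | P (lift_perm i k q)]|.
Proof.
rewrite -!sum1dep_card (reindex (lift_perm i k)); last first.
  pose ulsf i (s : 'S_n.+1) k := odflt k (unlift (s i) (s (lift i k))).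
  have ulsfK i' (s : 'S_n.+1) k' : lift (s i') (ulsf i' s k') = s (lift i' k').
    rewrite /ulsf; have:= neq_lift i' k'.
    by rewrite -(can_eq (permK s)) => /unlift_some[] ? ? ->.
  have inj_ulsf : injective (ulsf i _).
    move=> s; apply: can_inj (ulsf (s i) s^-1%g) _ => k'.
    by rewrite {1}/ulsf ulsfK !permK liftK.
  exists (fun s => perm (inj_ulsf s)) => [s _ | s /andP[/eqP si _]].
    by apply/permP=> k'; rewrite permE /ulsf lift_perm_lift lift_perm_id liftK.
  apply/permP=> k'; case: (unliftP i k') => [k''|] ->; rewrite ?lift_perm_id //.
  by rewrite lift_perm_lift -si permE ulsfK.
by apply: eq_bigl => q; rewrite lift_perm_id eqxx.
Qed.

Definition blockdec n (blk : nat -> nat) (p : 'S_n) : bool :=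
  [forall i : 'I_n, forall j : 'I_n, ((i < j) && (blk i == blk j)) ==> (p j < p i)].

Definition fixfree n (blk : nat -> nat) c (p : 'S_n) : bool :=
  [forall i : 'I_n, (blk i == c) ==> (p i != i)].

(* [lift_perm i k q] is decreasing on the block of [i] iff the entries of that block
   before position [i] lie above [k] and those after it lie below [k]. *)
Definition insertable n (blk : nat -> nat) (i k : nat) (q : 'S_n) : bool :=
  [forall j : 'I_n, (blk (bump i j) == blk i) ==> ((j < i) == (k <= q j))].

Lemma blockdec_ext n (blk blk' : nat -> nat) (p : 'S_n) : blk =1 blk' ->
  blockdec blk p = blockdec blk' p.
Proof. by move=> e; apply: eq_forallb => i; apply: eq_forallb => j; rewrite !e. Qed.

Lemma fixfree_ext n (blk blk' : nat -> nat) c (p : 'S_n) : blk =1 blk' ->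
  fixfree blk c p = fixfree blk' c p.
Proof. by move=> e; apply: eq_forallb => i; rewrite !e. Qed.

Lemma blockdec_lift_perm n blk (i k : 'I_n.+1) (q : 'S_n) :
  blockdec blk (lift_perm i k q) =
  blockdec (blk \o bump i) q && insertable blk i k q.
Proof.
apply/idP/andP => [/forallP dec_p | [/forallP dec_q /forallP ins]].
  split.
    apply/forallP => j; apply/forallP => j'; have := forallP (dec_p (lift i j)) (lift i j').
    by rewrite !lift_perm_lift /= !ltn_bump2.
  apply/forallP => j; apply/implyP => /eqP bj; case: (ltnP j i) => ji.
    have := forallP (dec_p (lift i j)) i.
    by rewrite lift_perm_id lift_perm_lift /= ltn_bumpl ji bj eqxx ltn_bumpr eq_sym /= => ->.
  have := forallP (dec_p i) (lift i j).
  rewrite lift_perm_id lift_perm_lift /= ltn_bumpr ji bj eqxx ltn_bumpl /= => qjk.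
  by rewrite leqNgt qjk.
apply/forallP => x; apply/forallP => y; apply/implyP.
case: (unliftP i x) => [j|] ->; case: (unliftP i y) => [j'|] -> /andP[lt_xy b_xy].
- rewrite !lift_perm_lift /= ltn_bump2.
  by have := forallP (dec_q j) j'; rewrite /= -(ltn_bump2 i) lt_xy b_xy.
- rewrite lift_perm_id lift_perm_lift /= ltn_bumpr.
  move: lt_xy b_xy; rewrite /= ltn_bumpl => ji /eqP bj.
  by have := ins j; rewrite bj eqxx ji /= => /eqP <-.
- rewrite lift_perm_id lift_perm_lift /= ltn_bumpl.
  move: lt_xy b_xy; rewrite /= ltn_bumpr => ij /eqP bj.
  by have := ins j'; rewrite -bj eqxx ltnNge ij /= => /eqP; rewrite ltnNge => <-.
- by move: lt_xy; rewrite ltnn.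
Qed.

Lemma fixfree_lift_perm n blk c (i : 'I_n.+1) (q : 'S_n) :
  fixfree blk c (lift_perm i i q) = (blk i != c) && fixfree (blk \o bump i) c q.
Proof.
apply/forallP/andP => [ff_p | [bi /forallP ff_q] x].
  split; first by have := ff_p i; rewrite lift_perm_id eqxx implybF.
  by apply/forallP => j; have := ff_p (lift i j); rewrite lift_perm_lift (inj_eq (@lift_inj _ i)).
case: (unliftP i x) => [j|] ->; last by rewrite (negbTE bi).
by rewrite lift_perm_lift (inj_eq (@lift_inj _ i)); exact: ff_q.
Qed.

Lemma blockdec_leq n blk (q : 'S_n) (j k : 'I_n) :
  blockdec blk q -> blk j = blk k -> j <= k -> q k <= q j.
Proof.
move=> /forallP dec_q bjk; rewrite leq_eqVlt => /orP[/eqP/val_inj -> // | lt_jk].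
by have := forallP (dec_q j) k; rewrite lt_jk bjk eqxx => /ltnW.
Qed.

Lemma blockdec_fix_uniq n blk (p : 'S_n) (i j : 'I_n) : blockdec blk p ->
  blk i = blk j -> p i = i -> p j = j -> i = j.
Proof.
move=> dec_p bij fix_i fix_j; case: (ltngtP i j) => [lt | lt | /val_inj //].
  by have := blockdec_leq dec_p bij (ltnW lt); rewrite fix_i fix_j leqNgt lt.
by have := blockdec_leq dec_p (esym bij) (ltnW lt); rewrite fix_i fix_j leqNgt lt.
Qed.

Lemma blockdec_fixfreeN n blk c (p : 'S_n) : blockdec blk p ->
  ~~ fixfree blk c p = \sum_(i : 'I_n | blk i == c) (p i == i) :> nat.
Proof.
move=> dec_p; rewrite sum_indicator_uniq; last first.
  move=> i j /eqP bi /eqP bj /eqP fix_i /eqP fix_j.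
  by apply: blockdec_fix_uniq dec_p _ fix_i fix_j; rewrite bi bj.
rewrite /fixfree negb_forall; congr nat_of_bool.
by apply: eq_existsb => i; rewrite negb_imply negbK.
Qed.

Section FixedPointRemoval.

Variables (n : nat) (blk blk' : nat -> nat) (c st L : nat).
Hypothesis blkE : forall x, (blk x == c) = (st <= x <= st + L).
Hypothesis blk'E : forall x, (blk' x == c) = (st <= x < st + L).
Hypothesis blk_bump : forall i j, st <= i <= st + L -> blk (bump i j) = blk' j.
Hypothesis block_le : st + L <= n.

Lemma insertable_uniq (q : 'S_n) (i i' : 'I_n.+1) : blk i == c -> blk i' == c ->
  insertable blk i i q -> insertable blk i' i' q -> i = i'.
Proof.
wlog lt_ii' : i i' / i < i'.
  move=> wlog bi bi' ins ins'; case: (ltngtP i i') => [lt | lt | /val_inj //].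
    exact: wlog.
  exact/esym/wlog.
move=> bi bi' /forallP ins /forallP ins'; exfalso.
have i_lt_n : i < n by move: bi'; rewrite blkE; lia.
have b_next : blk (bump i i) == blk i.
  by rewrite (eqP bi) blkE /bump leqnn; move: bi bi'; rewrite !blkE; lia.
have := ins (Ordinal i_lt_n); rewrite /= b_next ltnn /= => lt_qi.
have := ins' (Ordinal i_lt_n); rewrite /= /bump leqNgt lt_ii' add0n.
rewrite (eqP bi) (eqP bi') eqxx /=; lia.
Qed.

Lemma insertable_fixfree (q : 'S_n) (i : 'I_n.+1) :
  blk i == c -> insertable blk i i q -> fixfree blk' c q.
Proof.
move=> bi /forallP ins; apply/forallP => j; apply/implyP => bj; apply/eqP => fix_j.
have bump_j : blk (bump i j) == blk i by rewrite blk_bump ?(eqP bi) // -blkE.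
by have := ins j; rewrite bump_j fix_j /= ltnNge; case: leqP.
Qed.

(* The insertion point is the first position of the block where [q] drops below the
   diagonal (or the end of the block): [j |-> q j - j] decreases strictly on it. *)
Lemma fixfree_insertable (q : 'S_n) : blockdec blk' q -> fixfree blk' c q ->
  exists2 i : 'I_n.+1, blk i == c & insertable blk i i q.
Proof.
move=> dec_q /forallP ff_q.
pose P x := (st + L <= x) || [exists j : 'I_n, [&& val j == x, blk' j == c & q j < j]].
have [|i Pi min_i] := @ex_minnP P; first by exists (st + L); rewrite /P leqnn.
have i_le : i <= st + L by apply: min_i; rewrite /P leqnn.
have st_le : st <= i.
  case/orP: Pi => [|/existsP[j /and3P[/eqP <- bj _]]]; first lia.
  by move: bj; rewrite blk'E => /andP[].
have below_i (j : 'I_n) : blk' j == c -> j < i -> i <= q j.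
  rewrite blk'E => bj lt_ji; have k_lt : i.-1 < n by lia.
  pose k := Ordinal k_lt.
  have bk : blk' k == c by rewrite blk'E /=; lia.
  have qk_ge : k <= q k.
    have not_Pk : ~~ P k by apply/negP => /min_i /=; lia.
    by move: not_Pk; rewrite /P negb_or => /andP[_ /existsPn /(_ k)]; rewrite eqxx bk -leqNgt.
  have qk_ne : q k != k :> nat by apply: contraNneq (implyP (ff_q k) bk) => /val_inj ->.
  have bjk : blk' j = blk' k by rewrite (eqP bk); apply/eqP; rewrite blk'E.
  have := blockdec_leq dec_q bjk (_ : j <= k); move: qk_ge qk_ne => /=; lia.
have above_i (j : 'I_n) : blk' j == c -> i <= j -> q j < i.
  rewrite blk'E => bj le_ij; move: Pi; rewrite /P leqNgt (_ : i < st + L) /=; last lia.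
  case/existsP => j0 /and3P[/eqP j0E bj0 qj0].
  have bjj0 : blk' j0 = blk' j by rewrite (eqP bj0); apply/esym/eqP; rewrite blk'E.
  by have := blockdec_leq dec_q bjj0 (_ : j0 <= j); rewrite j0E in qj0 *; lia.
have i_lt : i < n.+1 by lia.
have bi : blk i == c by rewrite blkE st_le i_le.
exists (Ordinal i_lt) => //; apply/forallP => j /=; apply/implyP.
rewrite blk_bump ?st_le ?i_le // (eqP bi) => bj.
case: ltnP => [/(below_i j bj) -> // | /(above_i j bj)]; by rewrite ltnNge => /negbTE ->.
Qed.

Lemma sum_insertable (q : 'S_n) : blockdec blk' q ->
  \sum_(i : 'I_n.+1 | blk i == c) (insertable blk i i q : nat) = fixfree blk' c q.
Proof.
move=> dec_q; rewrite sum_indicator_uniq; last by move=> i i' bi bi'; apply: insertable_uniq.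
case: (boolP (fixfree blk' c q)) => [ff_q | /negP not_ff].
  have [i bi ins] := fixfree_insertable dec_q ff_q.
  by apply/eqP; rewrite eqb1; apply/existsP; exists i; rewrite bi.
apply/eqP; rewrite eqb0; apply/existsP => -[i /andP[bi ins]].
by apply: not_ff; apply: insertable_fixfree ins.
Qed.

Variables (E : pred 'S_n.+1) (E' : pred 'S_n).
Hypothesis E_lift : forall (i : 'I_n.+1) q, blk i == c -> E (lift_perm i i q) = E' q.

Lemma card_fixed_at (i : 'I_n.+1) : blk i == c ->
  #|[set p : 'S_n.+1 | (p i == i) && (blockdec blk p && E p)]| =
  #|[set q : 'S_n | blockdec blk' q && E' q && insertable blk i i q]|.
Proof.
move=> bi; rewrite card_lift_perm; apply: eq_card => q; rewrite !inE blockdec_lift_perm E_lift //.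
rewrite (@blockdec_ext _ _ blk') => [|j]; first by rewrite andbAC.
by apply: blk_bump; rewrite -blkE.
Qed.

Lemma card_blockdec_remove_fixed_point :
  #|[set p : 'S_n.+1 | blockdec blk p && E p]| =
  #|[set p : 'S_n.+1 | blockdec blk p && E p && fixfree blk c p]| +
  #|[set q : 'S_n | blockdec blk' q && E' q && fixfree blk' c q]|.
Proof.
rewrite !card_set_indicator.
have split_ff (p : 'S_n.+1) : (blockdec blk p && E p : nat) =
    (blockdec blk p && E p && fixfree blk c p) + (blockdec blk p && E p && ~~ fixfree blk c p).
  by case: (blockdec blk p && E p); case: (fixfree blk c p).
rewrite (eq_bigr _ (fun p _ => split_ff p)) big_split /=; congr (_ + _).
have fixed_sum (p : 'S_n.+1) : (blockdec blk p && E p && ~~ fixfree blk c p : nat) =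
    \sum_(i : 'I_n.+1 | blk i == c) ((p i == i) && (blockdec blk p && E p) : nat).
  case: (boolP (blockdec blk p)) => [dec_p | _]; last by rewrite big1 => [|i _]; rewrite ?andbF.
  case: (E p); last by rewrite big1 => [|i _]; rewrite ?andbF.
  by rewrite /= blockdec_fixfreeN //; apply: eq_bigr => i _; rewrite andbT.
rewrite (eq_bigr _ (fun p _ => fixed_sum p)) exchange_big /=.
rewrite (eq_bigr _ (fun i bi => etrans (esym (card_set_indicator _)) (card_fixed_at bi))).
under eq_bigr => i _ do rewrite card_set_indicator.
rewrite exchange_big /=; apply: eq_bigr => q _.
case: (boolP (blockdec blk' q && E' q)) => /= [/andP[dec_q _] | _]; last by rewrite big1.
exact: sum_insertable.
Qed.

End FixedPointRemoval.

Definition block_start (blk : nat -> nat) i := (i == 0) || (blk i.-1 != blk i).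

Lemma insertable_max n blk (i : 'I_n.+1) (q : 'S_n) : {homo blk : x y / x <= y} ->
  insertable blk i n q = block_start blk i.
Proof.
move=> blk_mono; have q_lt j : (n <= q j) = false by rewrite leqNgt ltn_ord.
apply/forallP/idP => [ins | start j].
  case: (posnP i) => [-> // | i_gt0]; apply/orP; right; apply/eqP => same.
  have prev_lt : i.-1 < n by have := ltn_ord i; lia.
  have bump_prev : bump i i.-1 = i.-1 by rewrite /bump (_ : i <= i.-1 = false) //; lia.
  by have := ins (Ordinal prev_lt); rewrite /= bump_prev same eqxx ltn_predL i_gt0 q_lt.
rewrite q_lt eqbF_neg; apply/implyP; apply: contraTN => lt_ji.
rewrite /bump leqNgt lt_ji add0n; case/orP: start => [/eqP i0 | ]; first by rewrite i0 in lt_ji.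
apply: contraNN => /eqP same; rewrite eqn_leq blk_mono ?leq_pred //= -same blk_mono //; lia.
Qed.

Lemma card_blockdec_max_at n blk (i : 'I_n.+1) : {homo blk : x y / x <= y} ->
  #|[set p : 'S_n.+1 | (p i == ord_max) && blockdec blk p]| =
  block_start blk i * #|[set q : 'S_n | blockdec (blk \o bump i) q]|.
Proof.
move=> blk_mono; rewrite card_lift_perm.
have -> : [set q : 'S_n | blockdec blk (lift_perm i ord_max q)] =
          [set q | blockdec (blk \o bump i) q && block_start blk i].
  by apply/setP => q; rewrite !inE blockdec_lift_perm insertable_max.
case: (block_start blk i); first by rewrite mul1n; apply: eq_card => q; rewrite !inE andbT.
by rewrite mul0n; apply/eqP; rewrite cards_eq0; apply/eqP/setP => q; rewrite !inE andbF.
Qed.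

Lemma card_blockdec_sum_max n blk :
  #|[set p : 'S_n.+1 | blockdec blk p]| =
  \sum_(i < n.+1) #|[set p : 'S_n.+1 | (p i == ord_max) && blockdec blk p]|.
Proof.
rewrite card_set_indicator; under [RHS]eq_bigr => i _ do rewrite card_set_indicator.
rewrite exchange_big /=; apply: eq_bigr => p _.
case: (blockdec blk p); last by rewrite big1 => [|i _]; rewrite ?andbF.
under eq_bigr do rewrite andbT.
rewrite (@sum_indicator_uniq _ xpredT) => [|i j _ _ /eqP pi /eqP pj]; last first.
  by apply: (@perm_inj _ p); rewrite pi pj.
by apply/esym/eqP; rewrite eqb1; apply/existsP; exists (p^-1 ord_max)%g; rewrite permKV eqxx.
Qed.

Ltac block_arith :=
  rewrite /block_of;
  repeat match goal with |- context[bump ?a ?b] =>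
    rewrite /bump; case: (leqP a b) => ?; rewrite ?add0n ?add1n end;
  repeat (case: ifP => [/idP ? | /negbT ?]); simpl; try lia.

Section BlockOf.
Variables l1 l2 l3 : nat.

Lemma block_of_homo : {homo block_of l1 l2 l3 : x y / x <= y}.
Proof. by move=> x y le_xy; block_arith. Qed.

Lemma block_of_eq0 x : (block_of l1 l2 l3 x == 0) = (x < l1).
Proof. by block_arith. Qed.

Lemma block_of_eq1 x : (block_of l1 l2 l3 x == 1) = (l1 <= x < l1 + l2).
Proof. by block_arith. Qed.

Lemma block_of_bump0 i j : i <= l1 -> block_of l1.+1 l2 l3 (bump i j) = block_of l1 l2 l3 j.
Proof. by move=> ?; block_arith. Qed.

Lemma block_of_bump1 i j : l1 <= i <= l1 + l2 ->
  block_of l1 l2.+1 l3 (bump i j) = block_of l1 l2 l3 j.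
Proof. by move=> ?; block_arith. Qed.

Lemma block_of_bump2 i j : l1 + l2 <= i <= l1 + l2 + l3 ->
  block_of l1 l2 l3.+1 (bump i j) = block_of l1 l2 l3 j.
Proof. by move=> ?; block_arith. Qed.

Lemma block_of_bump3 i j : l1 + l2 + l3 <= i ->
  block_of l1 l2 l3 (bump i j) = block_of l1 l2 l3 j.
Proof. by move=> ?; block_arith. Qed.

End BlockOf.

Definition ndec n l1 l2 l3 := #|[set q : 'S_n | blockdec (block_of l1 l2 l3) q]|.

Lemma sum_nat_first (F : nat -> nat) a b : a <= b ->
  (forall i, a < i < b -> F i = 0) -> \sum_(a <= i < b) F i = (a < b) * F a.
Proof.
rewrite leq_eqVlt => /orP[/eqP <- _ | lt_ab F0]; first by rewrite big_geq // ltnn.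
rewrite big_ltn // lt_ab mul1n big1_seq ?addn0 // => i /andP[_].
by rewrite mem_iota => ?; apply: F0; lia.
Qed.

(* Condition on the position of the largest value: it must open one of the four blocks. *)
Lemma ndec_rec n l1 l2 l3 : l1 + l2 + l3 <= n.+1 ->
  ndec n.+1 l1 l2 l3 = (0 < l1) * ndec n l1.-1 l2 l3 + (0 < l2) * ndec n l1 l2.-1 l3
    + (0 < l3) * ndec n l1 l2 l3.-1 + (l1 + l2 + l3 < n.+1) * ndec n l1 l2 l3.
Proof.
move=> le_n; set blk := block_of l1 l2 l3.
pose F i := block_start blk i * #|[set q : 'S_n | blockdec (blk \o bump i) q]|.
have -> : ndec n.+1 l1 l2 l3 = \sum_(0 <= i < n.+1) F i.
  rewrite /ndec card_blockdec_sum_max big_mkord.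
  by apply: eq_bigr => i _; apply: card_blockdec_max_at; apply: block_of_homo.
have first_term a l1' l2' l3' : (forall j, blk (bump a j) = block_of l1' l2' l3' j) ->
    block_start blk a -> F a = ndec n l1' l2' l3'.
  move=> blkE start; rewrite /F start mul1n.
  by apply: eq_card => q; rewrite !inE; apply: blockdec_ext.
have le12 : l1 <= l1 + l2 by rewrite leq_addr.
have le23 : l1 + l2 <= l1 + l2 + l3 by rewrite leq_addr.
rewrite (big_cat_nat (leq0n l1)) /=; last by lia.
rewrite (big_cat_nat le12) /=; last by lia.
rewrite (big_cat_nat le23) //=.
have no_start a b : (forall i, a < i < b -> ~~ block_start blk i) -> forall i, a < i < b -> F i = 0.
  by move=> noF i /noF; rewrite /F; case: block_start.
rewrite !sum_nat_first //; try (apply: no_start => i ?; rewrite /block_start /blk; block_arith).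
rewrite (_ : l1 < l1 + l2 = (0 < l2)); last lia.
rewrite (_ : l1 + l2 < l1 + l2 + l3 = (0 < l3)); last lia.
rewrite !addnA; congr (_ + _ + _ + _).
- case: (posnP l1) => [-> // | gt0]; rewrite !mul1n.
  apply: first_term; last by rewrite /block_start.
  by move=> j; rewrite /blk -{1}(prednK gt0) block_of_bump0.
- case: (posnP l2) => [-> // | gt0]; rewrite !mul1n.
  apply: first_term; last by rewrite /block_start /blk; block_arith.
  by move=> j; rewrite /blk -{1}(prednK gt0) block_of_bump1 //; lia.
- case: (posnP l3) => [-> // | gt0]; rewrite !mul1n.
  apply: first_term; last by rewrite /block_start /blk; block_arith.
  by move=> j; rewrite /blk -{1}(prednK gt0) block_of_bump2 //; lia.
- case: ltnP => [lt | _] //; rewrite !mul1n.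
  apply: first_term; last by rewrite /block_start /blk; block_arith.
  by move=> j; apply: block_of_bump3.
Qed.

Lemma ndec0 : ndec 0 0 0 0 = 1.
Proof.
rewrite /ndec (_ : [set q : 'S_0 | _] = setT) ?cardsT ?card_Sn //.
by apply/setP => q; rewrite !inE; apply/forallP => -[].
Qed.

Lemma ndec_fact n l1 l2 l3 : l1 + l2 + l3 <= n ->
  ndec n l1 l2 l3 * (l1`! * l2`! * l3`! * (n - (l1 + l2 + l3))`!) = n`!.
Proof.
elim: n l1 l2 l3 => [|n IH] l1 l2 l3 le_n.
  have [-> -> ->] : [/\ l1 = 0, l2 = 0 & l3 = 0] by split; lia.
  by rewrite ndec0.
rewrite ndec_rec //.
have t1 : (0 < l1) * ndec n l1.-1 l2 l3 *
    (l1`! * l2`! * l3`! * (n.+1 - (l1 + l2 + l3))`!) = l1 * n`!.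
  case: l1 le_n => [|l1] le_n //=; rewrite -(IH l1 l2 l3) ?factS; last lia.
  by rewrite (_ : n.+1 - _ = n - (l1 + l2 + l3)); [ring | lia].
have t2 : (0 < l2) * ndec n l1 l2.-1 l3 *
    (l1`! * l2`! * l3`! * (n.+1 - (l1 + l2 + l3))`!) = l2 * n`!.
  case: l2 le_n {t1} => [|l2] le_n //=; rewrite -(IH l1 l2 l3) ?factS; last lia.
  by rewrite (_ : n.+1 - _ = n - (l1 + l2 + l3)); [ring | lia].
have t3 : (0 < l3) * ndec n l1 l2 l3.-1 *
    (l1`! * l2`! * l3`! * (n.+1 - (l1 + l2 + l3))`!) = l3 * n`!.
  case: l3 le_n {t1 t2} => [|l3] le_n //=; rewrite -(IH l1 l2 l3) ?factS; last lia.
  by rewrite (_ : n.+1 - _ = n - (l1 + l2 + l3)); [ring | lia].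
have t4 : (l1 + l2 + l3 < n.+1) * ndec n l1 l2 l3 *
    (l1`! * l2`! * l3`! * (n.+1 - (l1 + l2 + l3))`!) = (n.+1 - (l1 + l2 + l3)) * n`!.
  have [lt | ge] := ltnP (l1 + l2 + l3) n.+1; last first.
    by rewrite !mul0n (_ : n.+1 - _ = 0) ?mul0n //; lia.
  have le : l1 + l2 + l3 <= n by rewrite -ltnS.
  rewrite mul1n -(IH l1 l2 l3 le) (_ : n.+1 - _ = (n - (l1 + l2 + l3)).+1) ?factS;
    [ring | lia].
by rewrite 3!mulnDl t1 t2 t3 t4 -!mulnDl factS; congr (_ * _); lia.
Qed.

Lemma ndec_binom x y s m : m <= s -> m <= x -> s - m <= y ->
  ndec (x + y) (x - m) (y - (s - m)) m = 'C(x + y, s) * 'C(s, m) * 'C(x + y - s, x - m).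
Proof.
move=> le_ms le_mx le_y.
have le_xy : x - m + (y - (s - m)) + m <= x + y by lia.
have F_gt0 : 0 < (x - m)`! * (y - (s - m))`! * m`! * (s - m)`! by rewrite !muln_gt0 !fact_gt0.
apply/eqP; rewrite -(eqn_pmul2r F_gt0); apply/eqP.
have := ndec_fact le_xy; rewrite (_ : x + y - _ = s - m) => [->|]; last lia.
rewrite -(bin_fact (_ : s <= x + y)); last lia.
rewrite -(bin_fact le_ms) -(bin_fact (_ : x - m <= x + y - s)); last lia.
rewrite (_ : x + y - s - (x - m) = y - (s - m)); [ring | lia].
Qed.

Lemma Vandermonde_cond x y s : s <= x + y ->
  \sum_(0 <= m < s.+1 | (m <= x) && (s - m <= y)) 'C(s, m) * 'C(x + y - s, x - m) = 'C(x + y, x).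
Proof.
move=> le_s; have := binomial.Vandermonde s (x + y - s) x; rewrite subnKC // => <-.
rewrite big_mkord (big_ord_widen (x + s).+1 (fun m => 'C(s, m) * 'C(x + y - s, x - m))); last lia.
rewrite (big_ord_widen_cond (x + s).+1 (fun m : nat => (m <= x) && (s - m <= y))
  (fun m => 'C(s, m) * 'C(x + y - s, x - m))); last lia.
rewrite big_mkcond [RHS]big_mkcond; apply: eq_bigr => m _.
case: ifP => [/andP[/andP[le_mx _] _] | out]; case: ifP => //; first by rewrite ltnS le_mx.
rewrite ltnS => le_mx; have [le_ms | lt_sm] := leqP m s; last by rewrite bin_small.
by rewrite (@bin_small (x + y - s) (x - m)) ?muln0 //; move: out; rewrite le_mx ltnS le_ms; lia.
Qed.

Lemma sum_ndec_over_m a1 a2 s b1 b2 :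
  \sum_(0 <= m < s.+1 | (m <= a1) && (s - m <= a2))
     ((b1 <= a1 - m) && (b2 <= a2 - (s - m))) *
     ndec (a1 + a2 - b1 - b2) (a1 - m - b1) (a2 - (s - m) - b2) m
  = ((b1 <= a1) && (b2 <= a2)) *
    ('C(a1 - b1 + (a2 - b2), s) * 'C(a1 - b1 + (a2 - b2), a1 - b1)).
Proof.
have [/andP[le_b1 le_b2] | lt_b] := boolP ((b1 <= a1) && (b2 <= a2)); last first.
  rewrite mul0n big1 // => m _.
  by rewrite (_ : _ && _ = false) ?mul0n //; move: lt_b; lia.
rewrite mul1n big_mkcond (eq_big_nat _ _ (F2 := fun m =>
    if (m <= a1 - b1) && (s - m <= a2 - b2) then
      'C(a1 - b1 + (a2 - b2), s) * ('C(s, m) * 'C(a1 - b1 + (a2 - b2) - s, a1 - b1 - m))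
    else 0)); last first.
  move=> m /andP[_ lt_ms]; case: ifP => in_a; case: ifP => in_b; last by [].
  - rewrite (_ : _ && _ = true) ?mul1n; last lia.
    rewrite (_ : a1 + a2 - b1 - b2 = a1 - b1 + (a2 - b2)); last lia.
    rewrite (_ : a1 - m - b1 = a1 - b1 - m); last lia.
    by rewrite (_ : a2 - (s - m) - b2 = a2 - b2 - (s - m)) ?ndec_binom ?mulnA //; lia.
  - by rewrite (_ : _ && _ = false) ?mul0n //; move: in_b; lia.
  - by move: in_a in_b; lia.
rewrite -big_mkcond; case: (leqP s (a1 - b1 + (a2 - b2))) => le_s.
  by rewrite -big_distrr Vandermonde_cond.
by rewrite bin_small // mul0n big1.
Qed.

Definition ndec_fixfree n (e1 e2 : bool) l1 l2 l3 :=
  let blk := block_of l1 l2 l3 in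
  #|[set p : 'S_n | blockdec blk p && (e1 ==> fixfree blk 0 p) && (e2 ==> fixfree blk 1 p)]|.

Lemma ndec_fixfreeFF n l1 l2 l3 : ndec_fixfree n false false l1 l2 l3 = ndec n l1 l2 l3.
Proof. by apply: eq_card => p; rewrite !inE !andbT. Qed.

Lemma ndec_fixfree_l1_0 n e2 l2 l3 :
  ndec_fixfree n true e2 0 l2 l3 = ndec_fixfree n false e2 0 l2 l3.
Proof.
apply: eq_card => p; rewrite !inE /= (_ : fixfree _ 0 p) //.
by apply/forallP => i; rewrite block_of_eq0.
Qed.

Lemma ndec_fixfree_l2_0 n e1 l1 l3 :
  ndec_fixfree n e1 true l1 0 l3 = ndec_fixfree n e1 false l1 0 l3.
Proof.
apply: eq_card => p; rewrite !inE /= (_ : fixfree _ 1 p) ?andbT //.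
by apply/forallP => i; rewrite block_of_eq1 addn0; case: leqP.
Qed.

Lemma ndec_fixfree_rec1 n e2 l1 l2 l3 : l1 <= n ->
  ndec_fixfree n.+1 false e2 l1.+1 l2 l3 =
  ndec_fixfree n.+1 true e2 l1.+1 l2 l3 + ndec_fixfree n true e2 l1 l2 l3.
Proof.
move=> le_n; pose E l1 n (p : 'S_n) := e2 ==> fixfree (block_of l1 l2 l3) 1 p.
have blkE x : (block_of l1.+1 l2 l3 x == 0) = (0 <= x <= 0 + l1) by rewrite block_of_eq0.
have blk'E x : (block_of l1 l2 l3 x == 0) = (0 <= x < 0 + l1) by rewrite block_of_eq0.
have E_lift (i : 'I_n.+1) q : block_of l1.+1 l2 l3 i == 0 -> E l1.+1 _ (lift_perm i i q) = E l1 _ q.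
  move=> bi; rewrite /E fixfree_lift_perm (eqP bi) /=; congr (_ ==> _).
  by apply: fixfree_ext => j; apply: block_of_bump0; move: bi; rewrite block_of_eq0.
have := card_blockdec_remove_fixed_point blkE blk'E
  (fun i j => @block_of_bump0 l1 l2 l3 i j) le_n E_lift.
rewrite /ndec_fixfree => split.
rewrite (eq_card (B := [set p | blockdec (block_of l1.+1 l2 l3) p && E l1.+1 _ p])) ?split.
  by congr (_ + _); apply: eq_card => p; rewrite !inE /E /= -!andbA; congr (_ && _); apply: andbC.
by move=> p; rewrite !inE /E andbT.
Qed.

Lemma ndec_fixfree_rec2 n e1 l1 l2 l3 : l1 + l2 <= n ->
  ndec_fixfree n.+1 e1 false l1 l2.+1 l3 =
  ndec_fixfree n.+1 e1 true l1 l2.+1 l3 + ndec_fixfree n e1 true l1 l2 l3.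
Proof.
move=> le_n; pose E l2 n (p : 'S_n) := e1 ==> fixfree (block_of l1 l2 l3) 0 p.
have blkE x : (block_of l1 l2.+1 l3 x == 1) = (l1 <= x <= l1 + l2).
  by rewrite block_of_eq1 addnS ltnS.
have blk'E x : (block_of l1 l2 l3 x == 1) = (l1 <= x < l1 + l2) by rewrite block_of_eq1.
have E_lift (i : 'I_n.+1) q : block_of l1 l2.+1 l3 i == 1 -> E l2.+1 _ (lift_perm i i q) = E l2 _ q.
  move=> bi; rewrite /E fixfree_lift_perm (eqP bi) /=; congr (_ ==> _).
  by apply: fixfree_ext => j; apply: block_of_bump1; rewrite -blkE.
have := card_blockdec_remove_fixed_point blkE blk'E
  (fun i j => @block_of_bump1 l1 l2 l3 i j) le_n E_lift.
rewrite /ndec_fixfree => split.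
rewrite (eq_card (B := [set p | blockdec (block_of l1 l2.+1 l3) p && E l2.+1 _ p])) ?split //.
by move=> p; rewrite !inE /E andbT.
Qed.

Lemma fixfree01 n blk (p : 'S_n) :
  fixfree blk 0 p && fixfree blk 1 p = [forall i : 'I_n, (blk i < 2) ==> (p i != i)].
Proof.
apply/andP/forallP => [[/forallP ff0 /forallP ff1] i | ff]; last first.
  by split; apply/forallP => i; apply/implyP => /eqP bi; have := ff i; rewrite bi.
by apply/implyP; case: (blk i) (ff0 i) (ff1 i) => [|[|]] //= /implyP-> // /implyP->.
Qed.

Lemma Nm_ndec_fixfree a1 a2 s m :
  Nm a1 a2 s m = ndec_fixfree (a1 + a2) true true (a1 - m) (a2 - (s - m)) m.
Proof. by apply: eq_card => p; rewrite !inE /= -andbA fixfree01. Qed.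

Local Open Scope ring_scope.

Lemma alt_sum_of_rec (k : nat) (f g : nat -> nat -> int) :
  (forall n, f n 0%N = g n 0%N) ->
  (forall n l, (k + l <= n)%N -> f n.+1 l.+1 = g n.+1 l.+1 - f n l) ->
  forall n l, (k + l <= n)%N -> f n l = \sum_(b < l.+1) (-1) ^+ b * g (n - b)%N (l - b)%N.
Proof.
move=> f0 frec n l; elim: l n => [|l IH] [|n] le_n.
- by rewrite big_ord_recl big_ord0 expr0 mul1r addr0 f0.
- by rewrite big_ord_recl big_ord0 expr0 mul1r addr0 f0.
- by move: le_n; rewrite addnS.
have le_n' : (k + l <= n)%N by rewrite -ltnS -addnS.
rewrite frec // IH //.
rewrite [RHS]big_ord_recl expr0 mul1r subn0; congr (_ + _).
rewrite -sumrN; apply: eq_bigr => b _.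
by rewrite lift0 !subSS exprS mulN1r mulNr.
Qed.

Lemma ndec_fixfreeFT_alt n l1 l2 l3 : (l1 + l2 <= n)%N ->
  (ndec_fixfree n false true l1 l2 l3)%:Z =
  \sum_(b2 < l2.+1) (-1) ^+ b2 * (ndec (n - b2) l1 (l2 - b2) l3)%:Z.
Proof.
apply: (alt_sum_of_rec (f := fun n l2 => (ndec_fixfree n false true l1 l2 l3)%:Z)
                       (g := fun n l2 => (ndec n l1 l2 l3)%:Z)) => [m | m l le_m] /=.
  by rewrite ndec_fixfree_l2_0 ndec_fixfreeFF.
by rewrite -ndec_fixfreeFF ndec_fixfree_rec2 // PoszD addrK.
Qed.

Lemma ndec_fixfreeTT_alt n l1 l2 l3 : (l1 <= n)%N ->
  (ndec_fixfree n true true l1 l2 l3)%:Z =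
  \sum_(b1 < l1.+1) (-1) ^+ b1 * (ndec_fixfree (n - b1) false true (l1 - b1) l2 l3)%:Z.
Proof.
apply: (alt_sum_of_rec (k := 0) (f := fun n l1 => (ndec_fixfree n true true l1 l2 l3)%:Z)
                       (g := fun n l1 => (ndec_fixfree n false true l1 l2 l3)%:Z))
  => [m | m l le_m] /=.
  by rewrite ndec_fixfree_l1_0.
by rewrite ndec_fixfree_rec1 // PoszD addrK.
Qed.

Lemma Posz_sum (I : Type) (r : seq I) (P : pred I) (F : I -> nat) :
  (\sum_(i <- r | P i) F i)%N%:Z = \sum_(i <- r | P i) (F i)%:Z.
Proof. by rewrite -natz natr_sum; apply: eq_bigr => i _; rewrite natz. Qed.

Lemma ndec_fixfree_alt N n l1 l2 l3 : (l1 + l2 <= n)%N -> (l1 <= N)%N -> (l2 <= N)%N ->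
  (ndec_fixfree n true true l1 l2 l3)%:Z =
  \sum_(b1 < N.+1) \sum_(b2 < N.+1) (-1) ^+ (b1 + b2) *
     (((b1 <= l1) && (b2 <= l2)) * ndec (n - b1 - b2) (l1 - b1) (l2 - b2) l3)%N%:Z.
Proof.
move=> le_n le1 le2; rewrite ndec_fixfreeTT_alt; last lia.
rewrite (big_ord_widen N.+1 (fun b1 => (-1) ^+ b1 *
  (ndec_fixfree (n - b1) false true (l1 - b1) l2 l3)%:Z)) // big_mkcond.
apply: eq_bigr => b1 _; rewrite ltnS; case: leqP => [le_b1 | lt_b1]; last first.
  by rewrite big1 // => b2 _; rewrite mul0n mulr0.
rewrite ndec_fixfreeFT_alt; last lia.
rewrite big_distrr (big_ord_widen N.+1 (fun b2 => (-1) ^+ b1 *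
  ((-1) ^+ b2 * (ndec (n - b1 - b2) (l1 - b1) (l2 - b2) l3)%:Z))) // big_mkcond.
apply: eq_bigr => b2 _; rewrite ltnS; case: leqP => _; last by rewrite mul0n mulr0.
by rewrite mul1n exprD mulrA.
Qed.

Lemma binZ_nat (N K : nat) : binZ N K = 'C(N, K).
Proof. by rewrite /binZ lez_nat /=; case: leqP => // lt_NK; rewrite bin_small. Qed.

Lemma binZ_out (N K : int) : ~~ ((0 <= K) && (K <= N)) -> binZ N K = 0.
Proof. by rewrite /binZ => /negbTE ->. Qed.

Lemma binZ_shift_prod a1 a2 s b1 b2 :
  binZ ((a1 + a2)%:Z - b1%:Z - b2%:Z) s%:Z * binZ ((a1 + a2)%:Z - b1%:Z - b2%:Z) (a1%:Z - b1%:Z) =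
  (((b1 <= a1) && (b2 <= a2)) *
   ('C(a1 - b1 + (a2 - b2), s) * 'C(a1 - b1 + (a2 - b2), a1 - b1)))%N%:Z.
Proof.
have [/andP[le_b1 le_b2] | out] := boolP ((b1 <= a1)%N && (b2 <= a2)%N).
  rewrite (_ : _ - _ - _ = (a1 - b1 + (a2 - b2))%N%:Z); last lia.
  by rewrite (_ : a1%:Z - b1%:Z = (a1 - b1)%N%:Z) ?binZ_nat ?mul1n ?PoszM //; lia.
by rewrite mul0n [X in _ * X]binZ_out ?mulr0 //; move: out; lia.
Qed.

Theorem mainTheorem12 (a1 a2 s : nat) :
  (G a1 a2 s)%:Z =
  \sum_(b1 < (a1 + a2).+1) \sum_(b2 < (a1 + a2).+1)
    (-1) ^+ (b1 + b2)%N *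
    binZ ((a1 + a2)%:Z - b1%:Z - b2%:Z) s%:Z *
    binZ ((a1 + a2)%:Z - b1%:Z - b2%:Z) (a1%:Z - b1%:Z).
Proof.
have Nm_alt m : (m <= a1)%N && (s - m <= a2)%N -> (Nm a1 a2 s m)%:Z =
    \sum_(b1 < (a1 + a2).+1) \sum_(b2 < (a1 + a2).+1) (-1) ^+ (b1 + b2) *
      (((b1 <= a1 - m) && (b2 <= a2 - (s - m))) *
        ndec (a1 + a2 - b1 - b2) (a1 - m - b1) (a2 - (s - m) - b2) m)%N%:Z.
  by move=> /andP[? ?]; rewrite Nm_ndec_fixfree; apply: ndec_fixfree_alt; lia.
rewrite /G Posz_sum (eq_bigr _ Nm_alt) exchange_big; apply: eq_bigr => b1 _.
rewrite exchange_big; apply: eq_bigr => b2 _.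
by rewrite -big_distrr -Posz_sum sum_ndec_over_m -mulrA binZ_shift_prod.
Qed.
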